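(* Let $\mathcal{X}$ be finite, $\mathcal{F}\subseteq\mathcal{F}^+\subseteq(\mathcal{X}\to[-1,1])$, $\mathcal{Z}=\mathcal{X}\times[-1,1]$, decision space $\Pi=\mathcal{F}^+$, and consider the regression loss with a base loss $\mathrm{L}:[-1,1]^2\to[0,1]$ that is $1$-Lipschitz in its second argument. Then $N_{\mathsf{frac}}(\mathcal{M}_{\mathsf{agnostic}};\Delta)\le N_{\mathsf{frac}}(\mathcal{F},\mathcal{F}^+;\Delta)$ for all $\Delta>0$. If moreover $\mathrm{L}(y,y')=|y-y'|$ is the absolute loss, then for all $\Delta>0$, $$N_{\mathsf{frac}}(\mathcal{M}_{\mathsf{agnostic}};\Delta)=N_{\mathsf{frac}}(\mathcal{M}_{\mathcal{F},\mathsf{realizable}};\Delta)=N_{\mathsf{frac}}(\mathcal{F},\mathcal{F}^+;\Delta).$$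
   Context: For $M\in\Delta(\mathcal{Z})$ and $f\in\mathcal{F}^+$, the regression loss is $L(M,f)=\mathbb{E}_{(x,y)\sim M}\mathrm{L}(y,f(x))-\min_{f^\star\in\mathcal{F}}\mathbb{E}_{(x,y)\sim M}\mathrm{L}(y,f^\star(x))$ (the minimum is assumed attained). $\mathcal{M}_{\mathsf{agnostic}}=\Delta(\mathcal{Z})$; $\mathcal{M}_{\mathcal{F},\mathsf{realizable}}$ is the set of $M\in\Delta(\mathcal{Z})$ for which there is $f_M\in\mathcal{F}$ with $y=f_M(x)$ almost surely under $M$. For a model class $\mathcal{M}$, $N_{\mathsf{frac}}(\mathcal{M};\Delta)=\inf_{p\in\Delta(\Pi)}\sup_{M\in\mathcal{M}}\frac1{p(\{\pi:L(M,\pi)\le\Delta\})}$, and $N_{\mathsf{frac}}(\mathcal{F},\mathcal{F}^+;\Delta)=\inf_{p\in\Delta(\mathcal{F}^+)}\sup_{\mu\in\Delta(\mathcal{X}),f^\star\in\mathcal{F}}\frac1{p(\{f:\mathbb{E}_{x\sim\mu}|f(x)-f^\star(x)|\le\Delta\})}$. *)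

From HB Require Import structures.
From mathcomp Require Import all_boot all_order all_algebra.
From mathcomp Require Import all_classical all_reals all_analysis.
Import Order.TTheory GRing.Theory Num.Theory.
Local Open Scope classical_set_scope.
Local Open Scope ring_scope.

(* The finite instance space X, as a (pointed) measurable type with   *)
(* the discrete sigma-algebra.  A point x0 is needed because every     *)
(* measurableType of MathComp-Analysis is pointed.                     *)
Definition ptfin (X : finType) (x0 : X) : Type := X.
Arguments ptfin {X} x0.
Section ptfin.
Variables (X : finType) (x0 : X).
HB.instance Definition _ := Finite.on (ptfin x0).
HB.instance Definition _ := isPointed.Build (ptfin x0) x0.
HB.instance Definition _ := @isMeasurable.Build default_measure_display
  (ptfin x0) discrete_measurable discrete_measurable0
  discrete_measurableC discrete_measurableU.
End ptfin.

(* The observation space: pairs (x, y) in X * R, with the product of  *)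
(* the discrete sigma-algebra and the Borel sigma-algebra of R.        *)
(* Z = X x [-1,1] is the measurable subset Zset of it.                 *)
Definition Zty (R : realType) {X : finType} (x0 : X) : measurableType _ :=
  (ptfin x0 * R)%type.

Definition Zset {R : realType} {X : finType} (x0 : X) : set (Zty R x0) :=
  [set z | -1 <= z.2 <= 1].

(* The space of all functions X -> R, with the Borel sigma-algebra of *)
(* R^X (generated by the evaluation maps f |-> f x).                  *)
Definition fnsp (X : finType) (R : realType) : Type := X -> R.
HB.instance Definition _ (X : finType) (R : realType) :=
  Choice.on (fnsp X R).
HB.instance Definition _ (X : finType) (R : realType) :=
  isPointed.Build (fnsp X R) (fun=> 0).

Definition evalgen (X : finType) (R : realType) : set (set (fnsp X R)) :=
  [set A | exists (x : X) (B : set R), measurable B /\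
           A = (fun f : fnsp X R => f x) @^-1` B].

Definition Fn (X : finType) (R : realType) : measurableType _ :=
  g_sigma_algebraType (@evalgen X R).

Definition cube {X : finType} {R : realType} : set (Fn X R) :=
  [set f | forall x, -1 <= f x <= 1].

(* Delta(Pi) for Pi = FP (a subset of X -> [-1,1]): Borel probability *)
(* measures on R^X whose outer measure of FP is one, i.e. probability  *)
(* measures on FP with its trace sigma-algebra.                        *)
Definition DeltaPi {X : finType} {R : realType} (FP : set (X -> R))
  : set (probability (Fn X R) R) :=
  [set p | forall A : set (Fn X R), measurable A -> FP `<=` A -> p A = 1%E].

(* 1/x on [0, +oo], with 1/0 = +oo *)
Definition recip {R : realType} (x : \bar R) : \bar R :=
  match x with
  | EFin r => if 0 < r then (r^-1)%:E else +oo%E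
  | +oo%E => 0%E
  | -oo%E => +oo%E
  end.

(* Regression loss.  L is the base loss (only its values on [-1,1]^2   *)
(* matter).                                                            *)
Definition Rloss {R : realType} {X : finType} {x0 : X} (L : R -> R -> R)
  (M : probability (Zty R x0) R) (f : X -> R) : \bar R :=
  (\int[M]_(z in Zset x0) (L z.2 (f z.1))%:E)%E.

Definition regloss {R : realType} {X : finType} {x0 : X} (L : R -> R -> R)
  (F : set (X -> R)) (M : probability (Zty R x0) R) (f : X -> R) : \bar R :=
  (Rloss L M f - ereal_inf [set Rloss L M g | g in F])%E.

Definition agnostic (R : realType) {X : finType} (x0 : X)
  : set (probability (Zty R x0) R) :=
  [set M | M (Zset x0) = 1%E].

Definition realizable {R : realType} {X : finType} (x0 : X) (F : set (X -> R))
  : set (probability (Zty R x0) R) :=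
  [set M | agnostic R x0 M /\
     exists fM, F fM /\ M [set z : Zty R x0 | z.2 = fM z.1] = 1%E].

Definition Nfrac_models {R : realType} {X : finType} {x0 : X}
  (L : R -> R -> R) (F FP : set (X -> R))
  (Mclass : set (probability (Zty R x0) R)) (Delta : R) : \bar R :=
  ereal_inf [set ereal_sup
     [set recip (p [set f : Fn X R | cube f /\
                      (regloss L F M f <= Delta%:E)%E]) | M in Mclass]
   | p in DeltaPi FP].

Definition simplex {R : realType} {X : finType} : set (X -> R) :=
  [set mu | (forall x, 0 <= mu x) /\ \sum_(x : X) mu x = 1].

Definition Nfrac_fun {R : realType} {X : finType} (F FP : set (X -> R))
  (Delta : R) : \bar R :=
  ereal_inf [set ereal_sup
     [set recip (p [set f : Fn X R | cube f /\
                      \sum_(x : X) mu_fs.1 x * `|f x - mu_fs.2 x| <= Delta])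
      | mu_fs in [set mu_fs : (X -> R) * (X -> R) |
                    simplex mu_fs.1 /\ F mu_fs.2]]
   | p in DeltaPi FP].

(* For finite X the risk of f splits over the cells {x} x [-1, 1]:
   R_M(f) = sum_x psi_x (f x).  When L is 1-Lipschitz in its second argument,
   psi_x is mu_x-Lipschitz, mu being the X-marginal of M; hence if g minimises
   the risk over F, the regret of f is at most sum_x mu_x |f x - g x|, and the
   Delta-ball around g for this weighted distance lies in the Delta-sublevel
   set of the regret.  For the
   absolute loss, the model with mass w_x at (x, g x) is realizable and its
   regret is exactly sum_x w_x |f x - g x|, so N_frac(F, F+) <=
   N_frac(realizable), which is at most N_frac(agnostic) since realizable
   models are agnostic. *)

From HB Require Import structures.
From mathcomp Require Import all_boot all_order all_algebra.
From mathcomp Require Import all_classical all_reals all_analysis measurable_realfun.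
From mathcomp Require Import lra.
Import Order.TTheory GRing.Theory Num.Theory numFieldNormedType.Exports.
Local Open Scope classical_set_scope.
Local Open Scope ring_scope.

Section measurable_Fn.
Context {X : finType} {R : realType}.

Lemma measurable_eval (x : X) :
  measurable_fun [set: Fn X R] (fun f : Fn X R => f x).
Proof. by move=> _ B mB; rewrite setTI; apply: sub_sigma_algebra; exists x, B. Qed.

Lemma measurable_cube : measurable (@cube X R).
Proof.
have -> : @cube X R =
    \bigcap_(x in [set: X]) ((fun f : Fn X R => f x) @^-1` `[-1, 1]).
  apply/seteqP; split => f /= f_cube x; first by move=> _; rewrite /= in_itv; exact: f_cube.
  by have := f_cube x I; rewrite /= in_itv.
apply: fin_bigcap_measurable; first exact: finite_finset.
by move=> x _; rewrite -[X in measurable X]setTI; apply: measurable_eval.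
Qed.

Lemma measurable_cube_sublevel (G : Fn X R -> R) (a : R) :
  measurable_fun [set: Fn X R] G ->
  measurable [set f : Fn X R | cube f /\ G f <= a].
Proof.
move=> mG; rewrite (_ : [set f | _] = cube `&` G @^-1` `]-oo, a]).
  by apply: measurableI measurable_cube _; rewrite -[X in measurable X]setTI; apply: mG.
by apply/seteqP; split => f /=; rewrite in_itv.
Qed.

Lemma measurable_weighted_dist_sublevel (w g : X -> R) (a : R) :
  measurable [set f : Fn X R | cube f /\ \sum_(x : X) w x * `|f x - g x| <= a].
Proof.
apply: measurable_cube_sublevel; apply: measurable_sum => x.
apply: measurable_funM => //; apply: measurableT_comp => //.
by apply: measurable_funB => //; exact: measurable_eval.
Qed.

End measurable_Fn.

Section measurable_Z.
Context {R : realType} {X : finType} {x0 : X}.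
Local Notation Z := (Zty R x0).

Lemma measurable_Zset : measurable (Zset x0 : set Z).
Proof.
rewrite (_ : Zset x0 = snd @^-1` `[-1, 1]); last first.
  by apply/seteqP; split => z /=; rewrite in_itv.
by rewrite -[X in measurable X]setTI; apply: measurable_snd.
Qed.

Lemma measurable_fun_fst (D : set Z) (h : X -> R) :
  measurable_fun D (fun z : Z => h z.1).
Proof.
apply: measurable_funTS.
exact: (@measurableT_comp _ _ _ _ _ _ (h : ptfin x0 -> R)).
Qed.

Lemma measurable_fun_snd (g : R -> R) :
  measurable_fun (`[-1, 1] : set R) g ->
  measurable_fun (Zset x0) (fun z : Z => g z.2).
Proof.
move=> mg; apply: (@measurable_comp _ _ _ _ _ _ (`[-1, 1] : set R) g (Zset x0) snd) => //.
- by move=> _ [z /= zZ <-]; rewrite in_itv.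
- exact: measurable_funTS measurable_snd.
Qed.

End measurable_Z.

Lemma sum_indicatorE {R : pzSemiRingType} {X : finType} (z : X) (G : X -> R) :
  \sum_(x : X) (z == x)%:R * G x = G z.
Proof.
rewrite (bigD1 z) //= eqxx mul1r big1 ?addr0 // => y yz.
by rewrite eq_sym (negbTE yz) mul0r.
Qed.

Section clamp.
Context {R : realType}.

Definition clamp (t : R) : R := if t < -1 then -1 else if 1 < t then 1 else t.

Lemma clamp_itv t : -1 <= clamp t <= 1.
Proof. by rewrite /clamp; case: ltP => ?; [|case: ltP => ?]; apply/andP; split; lra. Qed.

Lemma clamp_id t : -1 <= t <= 1 -> clamp t = t.
Proof. by case/andP => t_ge t_le; rewrite /clamp ltNge t_ge /= ltNge t_le. Qed.

Lemma clamp_dist a b : `|clamp a - clamp b| <= `|a - b|.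
Proof.
have := ler_norm (a - b); have := ler_norm (b - a); rewrite distrC /clamp ler_norml.
by case: (ltP a (-1)); case: (ltP b (-1)); case: (ltP 1 a); case: (ltP 1 b);
  move=> *; apply/andP; split; lra.
Qed.

Lemma dist_le_continuous (g : R -> R) :
  (forall a b, `|g a - g b| <= `|a - b|) -> continuous g.
Proof.
move=> g_dist a; apply/cvgrPdist_le => e e_gt0; exists e => //= b ab_lt.
exact: le_trans (g_dist a b) (ltW ab_lt).
Qed.

End clamp.

Lemma le_recip {R : realType} (a b : \bar R) :
  (0 <= a)%E -> (a <= b)%E -> (recip b <= recip a)%E.
Proof.
case: a b => [r| |] [s| |] //=; rewrite ?lee_fin => r_ge0.
- move=> rs; case: (ltP 0 r) => [r_gt0|_]; last by rewrite leey.
  have s_gt0 := lt_le_trans r_gt0 rs.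
  by rewrite s_gt0 lee_fin lef_pV2 ?posrE.
- by case: ifP; rewrite ?leey // lee_fin invr_ge0.
Qed.

Lemma le_ereal_inf_sup {R : realType} {T I J : Type} (P : set T)
    (SI : set I) (SJ : set J) (a : T -> I -> \bar R) (b : T -> J -> \bar R) :
  (forall p i, P p -> SI i -> exists2 j, SJ j & (a p i <= b p j)%E) ->
  (ereal_inf [set ereal_sup [set a p i | i in SI] | p in P] <=
   ereal_inf [set ereal_sup [set b p j | j in SJ] | p in P])%E.
Proof.
move=> ab; apply: le_ereal_inf_tmp => _ [p Pp <-].
apply: le_trans (ereal_inf_lbound _) _; first by exists p.
apply: ge_ereal_sup => _ [i SIi <-]; have [j SJj ab_ij] := ab p i Pp SIi.
by apply: le_trans ab_ij (ereal_sup_ubound _); exists j.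
Qed.

Lemma ereal_inf_attained {R : realType} {T : Type} {S : set T}
    {h : T -> \bar R} {s : T} :
  S s -> (forall t, S t -> (h s <= h t)%E) -> ereal_inf (h @` S) = h s.
Proof.
move=> Ss s_min; apply/le_anti/andP; split; first by apply: ereal_inf_lbound; exists s.
by apply: le_ereal_inf_tmp => _ [t St <-]; exact: s_min.
Qed.

Section lipschitz_loss.
Context {R : realType} {X : finType} {x0 : X}.
Local Notation Z := (Zty R x0).
Variable L : R -> R -> R.
Context {C : R}.
Hypothesis L_bounded : forall y t, -1 <= y <= 1 -> -1 <= t <= 1 -> 0 <= L y t <= C.
Hypothesis L_lipschitz : forall y t t', -1 <= y <= 1 -> -1 <= t <= 1 ->
  -1 <= t' <= 1 -> `|L y t - L y t'| <= `|t - t'|.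
Hypothesis L_measurable : forall t, -1 <= t <= 1 ->
  measurable_fun (`[-1, 1] : set R) (fun y => L y t).

Section cell_risk.
Variable M : probability Z R.
Hypothesis M_Zset : M (Zset x0) = 1%E.

Definition cell_mass (x : X) : R :=
  fine (\int[M]_(z in Zset x0) ((z.1 == x)%:R)%:E).

Definition cell_risk (x : X) (t : R) : R :=
  fine (\int[M]_(z in Zset x0) ((z.1 == x)%:R * L z.2 t)%:E).

Let measurable_indicator (x : X) :
  measurable_fun (Zset x0) (fun z : Z => (((z.1 == x)%:R : R)%:E : \bar R)).
Proof. by apply/measurable_EFinP; exact: measurable_fun_fst (fun a => (a == x)%:R). Qed.

Let measurable_cell_loss (x : X) t : -1 <= t <= 1 ->
  measurable_fun (Zset x0) (fun z : Z => (((z.1 == x)%:R * L z.2 t)%:E : \bar R)).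
Proof.
move=> tI; apply/measurable_EFinP/measurable_funM.
  exact: measurable_fun_fst (fun a => (a == x)%:R).
exact: measurable_fun_snd (L_measurable _ tI).
Qed.

Let cell_loss_ge0 (x : X) t (z : Z) : -1 <= t <= 1 -> Zset x0 z ->
  (0 <= ((z.1 == x)%:R * L z.2 t)%:E)%E.
Proof.
by move=> tI zZ; rewrite lee_fin mulr_ge0 //; case/andP: (L_bounded _ _ zZ tI).
Qed.

Let sum_integral_indicator :
  (\sum_(x : X) \int[M]_(z in Zset x0) ((z.1 == x)%:R)%:E)%E = 1%E.
Proof.
transitivity (\int[M]_(z in Zset x0)
    (\sum_(x <- index_enum X) ((z.1 == x)%:R : R)%:E))%E.
  rewrite ge0_integral_sum //; first exact: measurable_Zset.
transitivity (\int[M]_(z in Zset x0) cst 1%E z)%E.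
  apply: eq_integral => z _; rewrite sumEFin.
  by under eq_bigr do rewrite -[_%:R]mulr1; rewrite sum_indicatorE.
by rewrite integral_cst ?mul1e //; exact: measurable_Zset.
Qed.

Let integral_indicator_ge0 (x : X) : (0 <= \int[M]_(z in Zset x0) ((z.1 == x)%:R)%:E)%E.
Proof. by apply: integral_ge0 => z _; rewrite lee_fin. Qed.

Lemma integral_cell_mass (x : X) :
  (\int[M]_(z in Zset x0) ((z.1 == x)%:R)%:E)%E = (cell_mass x)%:E.
Proof.
have le1 : (\int[M]_(z in Zset x0) ((z.1 == x)%:R)%:E <= 1)%E.
  rewrite -sum_integral_indicator (bigD1 x) //=.
  by apply: leeDl; apply: sume_ge0 => y _.
by rewrite /cell_mass fineK // ge0_fin_numE // (le_lt_trans le1) ?ltry.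
Qed.

Lemma simplex_cell_mass : simplex cell_mass.
Proof.
split=> [x|]; first by rewrite -lee_fin -integral_cell_mass.
have := sum_integral_indicator.
by under eq_bigr do rewrite integral_cell_mass; rewrite sumEFin => -[].
Qed.

Lemma integral_cell_risk (x : X) t : -1 <= t <= 1 ->
  (\int[M]_(z in Zset x0) ((z.1 == x)%:R * L z.2 t)%:E)%E = (cell_risk x t)%:E.
Proof.
move=> tI; have ge0 : (0 <= \int[M]_(z in Zset x0) ((z.1 == x)%:R * L z.2 t)%:E)%E.
  by apply: integral_ge0 => z zZ; exact: cell_loss_ge0.
have leC : (\int[M]_(z in Zset x0) ((z.1 == x)%:R * L z.2 t)%:E <= C%:E)%E.
  rewrite -[C%:E]mule1 -M_Zset -integral_cst; last exact: measurable_Zset.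
  apply: ge0_le_integral => //; first exact: measurable_Zset.
  - by move=> z zZ; exact: cell_loss_ge0.
  - exact: measurable_cell_loss.
  - move=> z zZ; rewrite lee_fin; have /andP[L0 LC] := L_bounded _ _ zZ tI.
    by case: (z.1 == x); rewrite ?mul1r ?mul0r // (le_trans L0 LC).
by rewrite /cell_risk fineK // ge0_fin_numE // (le_lt_trans leC) ?ltry.
Qed.

Lemma Rloss_cell_sum (f : X -> R) : (forall x, -1 <= f x <= 1) ->
  Rloss L M f = (\sum_(x : X) cell_risk x (f x))%:E.
Proof.
move=> f_cube; transitivity (\int[M]_(z in Zset x0)
    (\sum_(x <- index_enum X) ((z.1 == x)%:R * L z.2 (f x))%:E))%E.
  by apply: eq_integral => z _; rewrite sumEFin sum_indicatorE.
rewrite (ge0_integral_sum M measurable_Zset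
  (f := fun (x : X) (z : Z) => ((z.1 == x)%:R * L z.2 (f x))%:E)).
- by rewrite -sumEFin; apply: eq_bigr => x _; exact: integral_cell_risk.
- by move=> x; exact: measurable_cell_loss.
- by move=> x z zZ; exact: cell_loss_ge0.
Qed.

Lemma cell_risk_le (x : X) t t' : -1 <= t <= 1 -> -1 <= t' <= 1 ->
  cell_risk x t <= cell_risk x t' + `|t - t'| * cell_mass x.
Proof.
move=> tI t'I; rewrite -lee_fin EFinD EFinM -integral_cell_risk //.
rewrite -integral_cell_risk // -integral_cell_mass.
rewrite -ge0_integralZl //; last exact: measurable_Zset.
rewrite -ge0_integralD //; last 4 first.
- exact: measurable_Zset.
- by move=> z zZ; exact: cell_loss_ge0.
- exact: measurable_cell_loss.
- exact: measurable_funeM.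
apply: ge0_le_integral => //.
- exact: measurable_Zset.
- by move=> z zZ; exact: cell_loss_ge0.
- exact: measurable_cell_loss.
- by apply: emeasurable_funD; [exact: measurable_cell_loss | exact: measurable_funeM].
move=> z zZ; rewrite -EFinM -EFinD lee_fin.
have := L_lipschitz _ _ _ zZ tI t'I; have := ler_norm (L z.2 t - L z.2 t').
by case: (z.1 == x); rewrite ?mul1r ?mul0r ?mulr1 ?mulr0 ?addr0 //; lra.
Qed.

Lemma cell_risk_dist (x : X) t t' : -1 <= t <= 1 -> -1 <= t' <= 1 ->
  `|cell_risk x t - cell_risk x t'| <= `|t - t'|.
Proof.
move=> tI t'I; have [mass_ge0 sum_mass] := simplex_cell_mass.
have mass_le1 : cell_mass x <= 1.
  by rewrite -sum_mass (bigD1 x) //= lerDl sumr_ge0.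
have lip := cell_risk_le x _ _ tI t'I; have lip' := cell_risk_le x _ _ t'I tI.
have : `|t - t'| * cell_mass x <= `|t - t'| by rewrite ler_piMr.
by rewrite distrC in lip' *; rewrite ler_norml; lra.
Qed.

Section regret.
Variables (F : set (X -> R)) (fs : X -> R).
Hypothesis fs_cube : forall x, -1 <= fs x <= 1.
Hypothesis F_fs : F fs.
Hypothesis fs_min : forall g, F g -> (Rloss L M fs <= Rloss L M g)%E.

Lemma regloss_cell_sum (f : X -> R) : (forall x, -1 <= f x <= 1) ->
  regloss L F M f =
  (\sum_(x : X) cell_risk x (f x) - \sum_(x : X) cell_risk x (fs x))%:E.
Proof.
move=> f_cube; rewrite /regloss (ereal_inf_attained F_fs fs_min).
by rewrite !Rloss_cell_sum // -EFinB.
Qed.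

Lemma regloss_le_weighted_dist (f : X -> R) : (forall x, -1 <= f x <= 1) ->
  (regloss L F M f <= (\sum_(x : X) cell_mass x * `|f x - fs x|)%:E)%E.
Proof.
move=> f_cube; rewrite regloss_cell_sum // lee_fin lerBlDr -big_split /=.
apply: ler_sum => x _; rewrite addrC mulrC.
exact: cell_risk_le.
Qed.

(* The cell risks are only controlled on [-1, 1]; clamping makes them
   continuous on the whole line without changing the sublevel set. *)
Lemma measurable_regloss_sublevel (Delta : R) :
  measurable [set f : Fn X R | cube f /\ (regloss L F M f <= Delta%:E)%E].
Proof.
rewrite (_ : [set f | _] = [set f : Fn X R | cube f /\
    \sum_(x : X) cell_risk x (clamp (f x)) <= Delta + \sum_(x : X) cell_risk x (fs x)]).
  apply: measurable_cube_sublevel; apply: measurable_sum => x /=.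
  apply: (measurableT_comp (f := fun t => cell_risk x (clamp t))); last exact: measurable_eval.
  apply: continuous_measurable_fun; apply: dist_le_continuous => a b.
  exact: le_trans (cell_risk_dist _ _ _ (clamp_itv a) (clamp_itv b)) (clamp_dist a b).
apply/seteqP; split => f /= [f_cube f_regret]; split => //;
  move: f_regret; rewrite regloss_cell_sum // lee_fin;
  under eq_bigr do rewrite clamp_id ?f_cube //; lra.
Qed.

End regret.
End cell_risk.

Lemma Nfrac_agnostic_le_fun {F FP : set (X -> R)} :
  F `<=` FP -> (forall f, FP f -> forall x, -1 <= f x <= 1) ->
  (forall M, agnostic R x0 M ->
     exists fs, F fs /\ forall g, F g -> (Rloss L M fs <= Rloss L M g)%E) ->
  forall Delta : R,
  (Nfrac_models L F FP (agnostic R x0) Delta <= Nfrac_fun F FP Delta)%E.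
Proof.
move=> F_sub_FP FP_cube risk_min Delta.
apply: le_ereal_inf_sup => p M _ M_Zset.
have [fs [F_fs fs_min]] := risk_min M M_Zset.
have fs_cube := FP_cube _ (F_sub_FP _ F_fs).
exists (cell_mass M, fs); first by split; [exact: simplex_cell_mass|].
apply: le_recip; first exact: measure_ge0.
apply: le_measure; rewrite ?inE.
- exact: measurable_weighted_dist_sublevel.
- exact: measurable_regloss_sublevel.
move=> f /= [f_cube f_dist]; split => //.
apply: le_trans (regloss_le_weighted_dist _ M_Zset _ _ fs_cube F_fs fs_min _ f_cube) _.
by rewrite lee_fin.
Qed.

End lipschitz_loss.

Lemma big_ord_enum {X : finType} (x0 : X) {V : Type} {idx : V}
    {op : Monoid.com_law idx} (G : X -> V) :
  \big[op/idx]_(k < #|X|) G (nth x0 (enum X) k) = \big[op/idx]_(x : X) G x.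
Proof.
rewrite -(big_mkord xpredT (fun k => G (nth x0 (enum X) k))) cardE.
by rewrite -(big_nth x0 xpredT G) big_enum.
Qed.

Section graph_model.
Context {R : realType} {X : finType} (x0 : X) (w fs : X -> R).
Hypothesis w_simplex : simplex w.
Local Notation Z := (Zty R x0).

(* [msum] sums a [nat]-indexed family of measures, so the atoms are listed
   along [enum X].  The proof argument of [graph_model] lets the probability
   instance below be keyed on a term that carries [simplex w]. *)
Let atom (k : nat) : {measure set Z -> \bar R} :=
  mscale (`|w (nth x0 (enum X) k)|)%:nng
    (\d_((nth x0 (enum X) k, fs (nth x0 (enum X) k)) : Z)).

Definition graph_model (_ : simplex w) := msum atom #|X|.

HB.instance Definition _ := Measure.on (graph_model w_simplex).

Lemma graph_modelE (A : set Z) :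
  graph_model w_simplex A = (\sum_(x : X) (w x)%:E * \d_((x, fs x) : Z) A)%E.
Proof.
rewrite /graph_model /msum /atom /mscale /=.
rewrite (big_ord_enum x0 (fun x => (`|w x|)%:E * \d_((x, fs x) : Z) A)%E).
by apply: eq_bigr => x _; rewrite ger0_norm //; case: w_simplex.
Qed.

Let graph_model_graph (A : set Z) :
  (forall x, A (x, fs x)) -> graph_model w_simplex A = 1%E.
Proof.
move=> A_graph; rewrite graph_modelE.
under eq_bigr do rewrite diracE mem_set // mule1.
by rewrite sumEFin; case: w_simplex => _ ->.
Qed.

Let graph_model_setT : graph_model w_simplex setT = 1%E.
Proof. exact: graph_model_graph. Qed.

HB.instance Definition _ :=
  @Measure_isProbability.Build _ _ R (graph_model w_simplex) graph_model_setT.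

Hypothesis fs_cube : forall x, -1 <= fs x <= 1.

Lemma graph_model_realizable (F : set (X -> R)) :
  F fs -> realizable x0 F (graph_model w_simplex).
Proof.
move=> F_fs; split; first exact: graph_model_graph.
by exists fs; split => //; exact: graph_model_graph.
Qed.

Lemma Rloss_abs_graph_model (g : X -> R) :
  Rloss (fun y t => `|y - t|) (graph_model w_simplex) g =
  (\sum_(x : X) w x * `|fs x - g x|)%:E.
Proof.
have m_loss : measurable_fun (Zset x0) (fun z : Z => (`|z.2 - g z.1|%:E : \bar R)).
  apply/measurable_EFinP; apply: measurableT_comp => //.
  apply: measurable_funB; first exact: measurable_funTS measurable_snd.
  exact: measurable_fun_fst.
rewrite /Rloss /= /graph_model ge0_integral_measure_sum //; last exact: measurable_Zset.
rewrite -sumEFin -(big_ord_enum x0 (fun x => (w x * `|fs x - g x|)%:E)).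
apply: eq_bigr => k _; rewrite ge0_integral_mscale //; last exact: measurable_Zset.
rewrite integral_dirac //; last exact: measurable_Zset.
rewrite diracE mem_set /=; last exact: fs_cube.
by rewrite mul1e -EFinM ger0_norm //; case: w_simplex.
Qed.

Lemma regloss_abs_graph_model (F : set (X -> R)) (f : X -> R) : F fs ->
  regloss (fun y t => `|y - t|) F (graph_model w_simplex) f =
  (\sum_(x : X) w x * `|f x - fs x|)%:E.
Proof.
move=> F_fs; have [w_ge0 _] := w_simplex.
rewrite /regloss (ereal_inf_attained F_fs); last first.
  move=> g _; rewrite !Rloss_abs_graph_model lee_fin.
  by apply: ler_sum => x _; rewrite subrr normr0 mulr0 mulr_ge0.
rewrite !Rloss_abs_graph_model.
under [X in (_ - X%:E)%E]eq_bigr do rewrite subrr normr0 mulr0.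
by rewrite big1_eq -EFinB subr0; under eq_bigr do rewrite distrC.
Qed.

End graph_model.

Lemma Nfrac_models_subclass {R : realType} {X : finType} {x0 : X}
    (L : R -> R -> R) (F FP : set (X -> R))
    (Mc1 Mc2 : set (probability (Zty R x0) R)) (Delta : R) :
  Mc1 `<=` Mc2 -> (Nfrac_models L F FP Mc1 Delta <= Nfrac_models L F FP Mc2 Delta)%E.
Proof. by move=> Mc12; apply: le_ereal_inf_sup => p M _ /Mc12 Mc2M; exists M. Qed.

Lemma Nfrac_fun_le_realizable_abs {R : realType} {X : finType} (x0 : X)
    {F FP : set (X -> R)} :
  F `<=` FP -> (forall f, FP f -> forall x, -1 <= f x <= 1) ->
  forall Delta : R, (Nfrac_fun F FP Delta <=
    Nfrac_models (fun y t : R => `|y - t|%R) F FP (realizable x0 F) Delta)%E.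
Proof.
move=> F_sub_FP FP_cube Delta.
apply: le_ereal_inf_sup => p [w fs] _ /= [w_simplex F_fs].
have fs_cube := FP_cube _ (F_sub_FP _ F_fs).
exists (graph_model x0 w fs w_simplex); first exact: graph_model_realizable.
rewrite (_ : [set f | _ /\ (regloss _ _ _ f <= _)%E] =
  [set f | cube f /\ \sum_(x : X) w x * `|f x - fs x| <= Delta]) //.
by apply/seteqP; split => f /= [f_cube]; rewrite regloss_abs_graph_model // lee_fin.
Qed.

Section absolute_loss.
Context {R : realType}.

Lemma abs_loss_bounded (y t : R) : -1 <= y <= 1 -> -1 <= t <= 1 -> 0 <= `|y - t| <= 2.
Proof. by move=> /andP[? ?] /andP[? ?]; rewrite normr_ge0 ler_norml; apply/andP; split; lra. Qed.

Lemma abs_loss_dist (y t t' : R) : `| `|y - t| - `|y - t'| | <= `|t - t'|.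
Proof. by rewrite (le_trans (ler_dist_dist _ _)) // opprB addrC addrA subrK distrC. Qed.

Lemma measurable_abs_loss (t : R) :
  measurable_fun (`[-1, 1] : set R) (fun y => `|y - t|).
Proof. by apply: measurableT_comp => //; exact: measurable_funB. Qed.

End absolute_loss.

Theorem mainTheorem19 (R : realType) (X : finType) (x0 : X)
  (F FP : set (X -> R))
  (HFFP : F `<=` FP)
  (HFP : forall f, FP f -> forall x, -1 <= f x <= 1) :
  (forall L : R -> R -> R,
     (forall y t, -1 <= y <= 1 -> -1 <= t <= 1 -> 0 <= L y t <= 1) ->
     (forall y t t', -1 <= y <= 1 -> -1 <= t <= 1 -> -1 <= t' <= 1 ->
        `|L y t - L y t'| <= `|t - t'|) ->
     (forall t : R, -1 <= t <= 1 ->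
        measurable_fun (`[-1, 1] : set R) (fun y : R => L y t)) ->
     (forall M, agnostic R x0 M ->
        exists fs, F fs /\ forall g, F g -> (Rloss L M fs <= Rloss L M g)%E) ->
     forall Delta : R, 0 < Delta ->
       (Nfrac_models L F FP (agnostic R x0) Delta <= Nfrac_fun F FP Delta)%E)
  /\
  (let Labs := fun y t : R => `|y - t| in
   (forall M, agnostic R x0 M ->
      exists fs, F fs /\ forall g, F g -> (Rloss Labs M fs <= Rloss Labs M g)%E) ->
   forall Delta : R, 0 < Delta ->
     Nfrac_models Labs F FP (agnostic R x0) Delta
       = Nfrac_models Labs F FP (realizable x0 F) Delta /\
     Nfrac_models Labs F FP (realizable x0 F) Delta = Nfrac_fun F FP Delta).
Proof.
split=> [L L_bounded L_lipschitz L_measurable risk_min Delta _|Labs risk_min Delta _].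
  exact (Nfrac_agnostic_le_fun L L_bounded L_lipschitz L_measurable
    HFFP HFP risk_min Delta).
have agnostic_le_fun := Nfrac_agnostic_le_fun Labs abs_loss_bounded
  (fun y t t' _ _ _ => abs_loss_dist y t t') (fun t _ => measurable_abs_loss t)
  HFFP HFP risk_min Delta.
have realizable_le_agnostic := Nfrac_models_subclass Labs F FP
  (realizable x0 F) (agnostic R x0) Delta (fun M => @proj1 _ _).
have fun_le_realizable := Nfrac_fun_le_realizable_abs x0 HFFP HFP Delta.
split; apply/le_anti/andP; split => //.
- exact: le_trans agnostic_le_fun fun_le_realizable.
- exact: le_trans realizable_le_agnostic agnostic_le_fun.
Qed.
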